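(* Let $\mathbf G_*=(\partial:G_1\to G_0)$ be a crossed module and let $\mathbf Z_*(\mathbf G_* )$ be the crossed module $\delta:G_1\to\mathbf Z_0(\mathbf G_* )$. Then: (i) for $(x,\xi)\in\mathbf Z_0(\mathbf G_* )$ and $y\in G_0$, $\xi(y)$ is a morphism $yx\to xy$ in $\mathsf{Cat}(\mathbf G_* )$; (ii) the family $\bar\xi=(\xi(y))_{y}$ is a natural isomorphism $(-)\cdot x\Rightarrow x\cdot(-)$; (iii) $(x,\bar\xi)$ is an object of the centre $\mathcal Z(\mathsf{Cat}(\mathbf G_* ))$; (iv) the map $(x,\xi)\mapsto (x,\bar\xi)$ is a bijection from $\mathbf Z_0(\mathbf G_* )$ onto the objects of $\mathcal Z(\mathsf{Cat}(\mathbf G_* ))$; (v) for $(x,\xi),(y,\eta)\in\mathbf Z_0(\mathbf G_* )$ and $a\in G_1$ with $y=\partial(a)x$, the morphism $a:x\to y$ of $\mathsf{Cat}(\mathbf G_* )$ is a morphism $(x,\bar\xi)\to(y,\bar\eta)$ in $\mathcal Z(\mathsf{Cat}(\mathbf G_* ))$ if and only if $(y,\eta)=\delta(a)\cdot(x,\xi)$; consequently the bijection of (iv), together with the identity on morphisms $a\mapsto a$, is an isomorphism of monoidal categories $\mathsf{Cat}(\mathbf Z_*(\mathbf G_* ))\to\mathcal Z(\mathsf{Cat}(\mathbf G_* ))$.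
   Context: A crossed module consists of groups $H_1,H_0$, a homomorphism $\partial:H_1\to H_0$ and a left action $(x,a)\mapsto{}^x a$ of $H_0$ on $H_1$ by automorphisms with $\partial({}^x a)=x\partial(a)x^{-1}$ and ${}^{\partial(b)}a=bab^{-1}$. For a crossed module $\mathbf H_*$, the strict monoidal groupoid $\mathsf{Cat}(\mathbf H_* )$ has objects the elements of $H_0$; a morphism $x\to y$ is an element $a\in H_1$ with $y=\partial(a)x$; composition of $a:x\to\partial(a)x$ and $b:\partial(a)x\to\partial(b)\partial(a)x$ is $ba$; the tensor product is $x\cdot y=xy$ on objects and $(a:x\to x')\cdot(b:y\to y')=(a\,{}^x b: xy\to x'y')$ on morphisms. For a monoidal category $(\mathcal C,\otimes)$ its centre $\mathcal Z(\mathcal C)$ has objects pairs $(x,\xi)$ with $\xi:(-)\otimes x\Rightarrow x\otimes(-)$ a natural isomorphism with components $\xi_y:y\otimes x\to x\otimes y$ such that $\xi_{y\otimes z}=(\xi_y\otimes 1_z)\circ(1_y\otimes\xi_z)$; morphisms $(x,\xi)\to(y,\eta)$ are $f:x\to y$ with $(f\otimes 1_z)\circ\xi_z=\eta_z\circ(1_z\otimes f)$ for all $z$; tensor $(x,\xi)\otimes(y,\eta)=(x\otimes y,\zeta)$ with $\zeta_z=(1_x\otimes\eta_z)\circ(\xi_z\otimes 1_y)$. Commutators $[x,t]=xtx^{-1}t^{-1}$. $\mathbf Z_0(\mathbf G_* )$ is the set of pairs $(x,\xi)$, $x\in G_0$, $\xi:G_0\to G_1$ with (Z1) $\partial\xi(t)=[x,t]$,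 (Z2) $\xi(\partial a)={}^xa\,a^{-1}$, (Z3) $\xi(st)=\xi(s)\,{}^s\xi(t)$; it is a group under $(x,\xi)(y,\eta)=(xy,t\mapsto{}^x\eta(t)\xi(t))$. $\delta:G_1\to\mathbf Z_0(\mathbf G_* )$ is $\delta(c)=(\partial c, t\mapsto c({}^tc)^{-1})$, and $\mathbf Z_0(\mathbf G_* )$ acts on $G_1$ by ${}^{(x,\xi)}a={}^xa$; this is a crossed module $\mathbf Z_*(\mathbf G_* )$. *)

Set Implicit Arguments.
Unset Strict Implicit.

Record Grp := {
  gcar :> Type;
  gmul : gcar -> gcar -> gcar;
  gone : gcar;
  ginv : gcar -> gcar;
  gmulA : forall a b c, gmul a (gmul b c) = gmul (gmul a b) c;
  gmul1g : forall a, gmul gone a = a;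
  gmulg1 : forall a, gmul a gone = a;
  gmulVg : forall a, gmul (ginv a) a = gone;
  gmulgV : forall a, gmul a (ginv a) = gone
}.
Arguments gmul {g} _ _.
Arguments gone {g}.
Arguments ginv {g} _.

Definition comm (G : Grp) (x t : G) : G :=
  gmul (gmul (gmul x t) (ginv x)) (ginv t).

Record XMod := {
  G1 : Grp;
  G0 : Grp;
  bd : G1 -> G0;
  act : G0 -> G1 -> G1;
  bd_mul : forall a b, bd (gmul a b) = gmul (bd a) (bd b);
  act_one : forall a, act gone a = a;
  act_mulg : forall x y a, act (gmul x y) a = act x (act y a);
  act_mul : forall x a b, act x (gmul a b) = gmul (act x a) (act x b);
  bd_act : forall x a, bd (act x a) = gmul (gmul x (bd a)) (ginv x);
  act_bd : forall a b, act (bd b) a = gmul (gmul b a) (ginv b)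
}.

(* ---------- strict monoidal categories (data only) ----------
   Morphisms form one type; each has a source and a target.
   [comp g f] is "g after f" (meaningful when tgt f = src g). *)
Record MonCat := {
  Ob : Type;
  Mor : Type;
  src : Mor -> Ob;
  tgt : Mor -> Ob;
  idm : Ob -> Mor;
  comp : Mor -> Mor -> Mor;
  munit : Ob;
  tens : Ob -> Ob -> Ob;
  tensm : Mor -> Mor -> Mor
}.

Definition is_hom (C : MonCat) (f : Mor C) (y z : Ob C) : Prop :=
  src f = y /\ tgt f = z.

Definition is_iso (C : MonCat) (f : Mor C) : Prop :=
  exists g, is_hom g (tgt f) (src f) /\
            comp g f = idm (src f) /\ comp f g = idm (tgt f).

Definition nat_iso_rtens_ltens (C : MonCat) (x : Ob C) (xi : Ob C -> Mor C) : Prop :=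
  (forall y, is_hom (xi y) (tens y x) (tens x y)) /\
  (forall y, is_iso (xi y)) /\
  (forall f : Mor C,
     comp (tensm (idm x) f) (xi (src f)) = comp (xi (tgt f)) (tensm f (idm x))).

Definition centre_obj (C : MonCat) (x : Ob C) (xi : Ob C -> Mor C) : Prop :=
  nat_iso_rtens_ltens x xi /\
  (forall y z, xi (tens y z) = comp (tensm (xi y) (idm z)) (tensm (idm y) (xi z))).

Definition centre_hom (C : MonCat) (x : Ob C) (xi : Ob C -> Mor C)
  (y : Ob C) (eta : Ob C -> Mor C) (f : Mor C) : Prop :=
  is_hom f x y /\
  (forall z, comp (tensm f (idm z)) (xi z) = comp (eta z) (tensm (idm z) f)).

Definition centre_tens (C : MonCat) (p q : Ob C * (Ob C -> Mor C))
  : Ob C * (Ob C -> Mor C) :=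
  (tens (fst p) (fst q),
   fun z => comp (tensm (idm (fst p)) ((snd q) z)) (tensm ((snd p) z) (idm (fst q)))).

Definition centre_unit (C : MonCat) : Ob C * (Ob C -> Mor C) :=
  (munit C, fun z => idm z).

(* ---------- Cat(H) for a crossed module H ----------
   A morphism x -> y is an element a of H1 with y = bd a * x;
   we represent it as the pair (x, a), with target bd a * x. *)
Definition CatX (H : XMod) : MonCat := {|
  Ob := G0 H;
  Mor := (G0 H * G1 H)%type;
  src := fun f => (fst f);
  tgt := fun f => gmul (bd (snd f)) (fst f);
  idm := fun x => (x, gone);
  comp := fun g f => ((fst f), gmul (snd g) (snd f));
  munit := gone;
  tens := fun x y => gmul x y;
  tensm := fun f g => (gmul (fst f) (fst g), gmul (snd f) (act (fst f) (snd g)))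
|}.

Section Z0.
Variable G : XMod.

Definition isZ0 (x : G0 G) (xi : G0 G -> G1 G) : Prop :=
  (forall t, bd (xi t) = comm x t) /\
  (forall a, xi (bd a) = gmul (act x a) (ginv a)) /\
  (forall s t, xi (gmul s t) = gmul (xi s) (act s (xi t))).

Definition Z0mul (p q : G0 G * (G0 G -> G1 G)) : G0 G * (G0 G -> G1 G) :=
  (gmul (fst p) (fst q), fun t => gmul (act (fst p) ((snd q) t)) ((snd p) t)).

Definition Z0one : G0 G * (G0 G -> G1 G) := (gone, fun _ => gone).

Definition delta (c : G1 G) : G0 G * (G0 G -> G1 G) :=
  (bd c, fun t => gmul c (ginv (act t c))).

Definition xibar (x : G0 G) (xi : G0 G -> G1 G) : G0 G -> Mor (CatX G) :=
  fun y => (gmul y x, xi y).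

End Z0.

(* Condition (Z1) says exactly that xi(y) has the
   right target, (Z2) is naturality of xibar, and (Z3) is the half-braiding
   ("hexagon") identity; every morphism of Cat(G) is invertible, so xibar is a
   natural isomorphism and (x, xibar) is an object of the centre.  Conversely
   an object (x, zeta) of the centre has components zeta y = (y x, xi y), and
   reading the three axioms backwards recovers (Z1)-(Z3) for xi.  Finally the
   centre-morphism condition for a : x -> y and the tensor/unit of the centre
   unfold to the multiplication of Z_0(G) and the formula for delta. *)

From Stdlib Require Import FunctionalExtensionality.

Set Implicit Arguments.
Unset Strict Implicit.

Section GroupIdentities.
Variable g : Grp.

Lemma gVK (a b : g) : gmul (ginv a) (gmul a b) = b.
Proof. rewrite gmulA, gmulVg, gmul1g; reflexivity. Qed.

Lemma gKV (a b : g) : gmul a (gmul (ginv a) b) = b.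
Proof. rewrite gmulA, gmulgV, gmul1g; reflexivity. Qed.

Lemma gmul_cancel_l (a b c : g) : gmul a b = gmul a c -> b = c.
Proof. intro H. rewrite <- (gVK a b), H, gVK. reflexivity. Qed.

Lemma idempotent_one (a : g) : gmul a a = a -> a = gone.
Proof. intro H. apply (gmul_cancel_l (a := a)). rewrite gmulg1. exact H. Qed.

Lemma solve_r (a b c : g) : gmul a b = c -> a = gmul c (ginv b).
Proof. intro H. rewrite <- H, <- gmulA, gmulgV, gmulg1. reflexivity. Qed.

Lemma inv_uniq (a b : g) : gmul a b = gone -> a = ginv b.
Proof. intro H. rewrite (solve_r H), gmul1g. reflexivity. Qed.

Lemma inv_mul (a b : g) : ginv (gmul a b) = gmul (ginv b) (ginv a).
Proof. symmetry. apply inv_uniq. rewrite <- gmulA, gVK, gmulVg. reflexivity. Qed.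

Lemma inv_inv (a : g) : ginv (ginv a) = a.
Proof. symmetry. apply inv_uniq. apply gmulgV. Qed.

Lemma inv_one : ginv (@gone g) = gone.
Proof. symmetry. apply inv_uniq. apply gmul1g. Qed.

End GroupIdentities.

(* Normalises a group word: pushes inverses onto letters, reassociates to the
   right and cancels adjacent pairs a^-1 a, a a^-1 and units. *)
Ltac gsimpl := repeat progress (rewrite ?inv_mul, ?inv_inv, ?inv_one;
  rewrite <- ?gmulA; rewrite ?gVK, ?gKV, ?gmulVg, ?gmulgV, ?gmul1g, ?gmulg1).

Section CrossedModuleFacts.
Variable G : XMod.

Lemma act_1 (x : G0 G) : act x gone = gone.
Proof. apply idempotent_one. rewrite <- act_mul, gmul1g. reflexivity. Qed.

Lemma bd_one : bd (@gone (G1 G)) = gone.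
Proof. apply idempotent_one. rewrite <- bd_mul, gmul1g. reflexivity. Qed.

Lemma bd_inv (a : G1 G) : bd (ginv a) = ginv (bd a).
Proof. apply inv_uniq. rewrite <- bd_mul, gmulVg. apply bd_one. Qed.

Lemma cocycle_one (xi : G0 G -> G1 G) :
  (forall s t, xi (gmul s t) = gmul (xi s) (act s (xi t))) -> xi gone = gone.
Proof.
  intro Z3. apply idempotent_one.
  pose proof (Z3 gone gone) as H. rewrite gmul1g, act_one in H.
  symmetry. exact H.
Qed.

Lemma CatX_is_iso (f : Mor (CatX G)) : is_iso f.
Proof.
  destruct f as [s c]. exists (gmul (bd c) s, ginv c). unfold is_hom; simpl.
  split; [split | split].
  - reflexivity.
  - rewrite bd_inv. gsimpl. reflexivity.
  - rewrite gmulVg. reflexivity.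
  - rewrite gmulgV. reflexivity.
Qed.

End CrossedModuleFacts.

Section FromZ0ToCentre.
Variable G : XMod.
Variables (x : G0 G) (xi : G0 G -> G1 G).
Hypothesis Hxi : isZ0 x xi.

(* (i): by (Z1), xi(y) : y x -> [x,y] y x = x y. *)
Lemma xibar_hom (y : G0 G) :
  is_hom (C := CatX G) (xibar x xi y) (gmul y x) (gmul x y).
Proof.
  destruct Hxi as [Z1 _]. split; simpl; [reflexivity |].
  rewrite Z1. unfold comm. gsimpl. reflexivity.
Qed.

(* Naturality of xibar is condition (Z2), combined with (Z3). *)
Lemma xibar_natural (f : Mor (CatX G)) :
  comp (tensm (idm (m := CatX G) x) f) (xibar x xi (src f))
  = comp (xibar x xi (tgt f)) (tensm f (idm (m := CatX G) x)).
Proof.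
  destruct Hxi as [_ [Z2 Z3]]. destruct f as [s c]. simpl. f_equal.
  rewrite Z3, Z2, act_bd, act_1. gsimpl. reflexivity.
Qed.

Lemma xibar_nat_iso : nat_iso_rtens_ltens (C := CatX G) x (xibar x xi).
Proof.
  split; [exact xibar_hom | split].
  - intro y. apply CatX_is_iso.
  - exact xibar_natural.
Qed.

(* The half-braiding identity for xibar is condition (Z3). *)
Lemma xibar_tens (y z : G0 G) :
  xibar x xi (gmul y z)
  = comp (tensm (xibar x xi y) (idm (m := CatX G) z))
         (tensm (idm (m := CatX G) y) (xibar x xi z)).
Proof.
  destruct Hxi as [_ [_ Z3]]. unfold xibar. simpl. f_equal.
  - gsimpl. reflexivity.
  - rewrite Z3, act_1. gsimpl. reflexivity.
Qed.

Lemma xibar_centre_obj : centre_obj (C := CatX G) x (xibar x xi).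
Proof. split; [exact xibar_nat_iso | exact xibar_tens]. Qed.

End FromZ0ToCentre.

Section FromCentreToZ0.
Variable G : XMod.
Variables (x : G0 G) (zeta : G0 G -> Mor (CatX G)).
Hypothesis Hzeta : centre_obj (C := CatX G) x zeta.

Definition xi_of : G0 G -> G1 G := fun y => snd (zeta y).

(* zeta is determined by its G1-components, since zeta y has source y x. *)
Lemma zeta_xibar (y : G0 G) : zeta y = xibar x xi_of y.
Proof.
  destruct Hzeta as [[Hhom _] _]. destruct (Hhom y) as [Hs _].
  unfold xibar, xi_of. simpl in Hs. rewrite <- Hs. destruct (zeta y); reflexivity.
Qed.

(* (Z3) is the G1-component of the half-braiding identity. *)
Lemma xi_of_Z3 (s t : G0 G) : xi_of (gmul s t) = gmul (xi_of s) (act s (xi_of t)).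
Proof.
  destruct Hzeta as [_ Hmul]. pose proof (f_equal snd (Hmul s t)) as H.
  rewrite !zeta_xibar in H. simpl in H.
  rewrite H, act_1. gsimpl. reflexivity.
Qed.

(* (Z1) expresses that zeta t ends at x t. *)
Lemma xi_of_Z1 (t : G0 G) : bd (xi_of t) = comm x t.
Proof.
  destruct Hzeta as [[Hhom _] _]. destruct (Hhom t) as [_ Ht].
  rewrite zeta_xibar in Ht. simpl in Ht.
  rewrite (solve_r Ht). unfold comm. gsimpl. reflexivity.
Qed.

(* (Z2) is naturality of zeta at the morphism a : 1 -> bd a. *)
Lemma xi_of_Z2 (a : G1 G) : xi_of (bd a) = gmul (act x a) (ginv a).
Proof.
  destruct Hzeta as [[_ [_ Hnat]] _].
  pose proof (f_equal snd (Hnat (gone, a))) as H.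
  rewrite !zeta_xibar in H. simpl in H.
  rewrite gmul1g, gmulg1, act_one, (cocycle_one xi_of_Z3), !gmulg1 in H.
  symmetry in H. exact (solve_r H).
Qed.

Lemma centre_obj_from_Z0 : exists xi, isZ0 x xi /\ xibar x xi = zeta.
Proof.
  exists xi_of. split.
  - split; [exact xi_of_Z1 | split; [exact xi_of_Z2 | exact xi_of_Z3]].
  - extensionality y. symmetry. apply zeta_xibar.
Qed.

End FromCentreToZ0.

(* (iv), injectivity: xi is recovered as the G1-components of xibar. *)
Lemma xibar_inj (G : XMod) (x x' : G0 G) (xi xi' : G0 G -> G1 G) :
  (x, xibar x xi) = (x', xibar x' xi') -> (x, xi) = (x', xi').
Proof.
  intro H. injection H as Hx Hxi. subst x'. f_equal.
  change ((fun y => snd (xibar x xi y)) = (fun y => snd (xibar x xi' y))).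
  rewrite Hxi. reflexivity.
Qed.

Section CentreMorphisms.
Variable G : XMod.
Variables (x y : G0 G) (xi eta : G0 G -> G1 G) (a : G1 G).
Hypothesis Hy : y = gmul (bd a) x.

Lemma centre_hom_Z0mul :
  centre_hom (C := CatX G) x (xibar x xi) y (xibar y eta) (x, a) ->
  (y, eta) = Z0mul (delta a) (x, xi).
Proof.
  intros [_ Hc]. rewrite Hy. unfold Z0mul, delta; simpl. f_equal.
  extensionality t. pose proof (f_equal snd (Hc t)) as H. simpl in H.
  rewrite act_1, gmulg1, gmul1g in H. symmetry in H.
  rewrite (solve_r H), act_bd. gsimpl. reflexivity.
Qed.

Lemma Z0mul_centre_hom :
  (y, eta) = Z0mul (delta a) (x, xi) ->
  centre_hom (C := CatX G) x (xibar x xi) y (xibar y eta) (x, a).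
Proof.
  intro E. unfold Z0mul, delta in E; simpl in E. injection E as _ Eeta.
  subst eta. split.
  - split; simpl; [reflexivity | symmetry; exact Hy].
  - intro z. simpl. f_equal. rewrite act_1, act_bd. gsimpl. reflexivity.
Qed.

End CentreMorphisms.

Lemma xibar_Z0mul (G : XMod) (x y : G0 G) (xi eta : G0 G -> G1 G) :
  let p := Z0mul (x, xi) (y, eta) in
  (fst p, xibar (fst p) (snd p))
  = centre_tens (C := CatX G) (x, xibar x xi) (y, xibar y eta).
Proof.
  unfold centre_tens; simpl. f_equal.
  extensionality z. unfold xibar; simpl. f_equal.
  - gsimpl. reflexivity.
  - rewrite act_1. gsimpl. reflexivity.
Qed.

Lemma xibar_Z0one (G : XMod) :
  (fst (Z0one G), xibar (fst (Z0one G)) (snd (Z0one G))) = centre_unit (CatX G).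
Proof.
  unfold centre_unit; simpl. f_equal. extensionality z. unfold xibar; simpl.
  rewrite gmulg1. reflexivity.
Qed.

Theorem lemma3p7 (G : XMod) :
  (* (i) xi(y) is a morphism y x -> x y in Cat(G) *)
  (forall (x : G0 G) xi, isZ0 x xi -> forall y : G0 G,
      is_hom (C := CatX G) (xibar x xi y) (gmul y x) (gmul x y)) /\
  (* (ii) xi-bar is a natural isomorphism (-).x => x.(-) *)
  (forall (x : G0 G) xi, isZ0 x xi -> nat_iso_rtens_ltens (C := CatX G) x (xibar x xi)) /\
  (* (iii) (x, xi-bar) is an object of the centre *)
  (forall (x : G0 G) xi, isZ0 x xi -> centre_obj (C := CatX G) x (xibar x xi)) /\
  (* (iv) (x,xi) |-> (x, xi-bar) is a bijection Z_0(G) -> Ob Z(Cat G) *)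
  ((forall (x : G0 G) xi (x' : G0 G) xi', isZ0 x xi -> isZ0 x' xi' ->
       (x, xibar x xi) = (x', xibar x' xi') -> (x, xi) = (x', xi')) /\
   (forall (x : G0 G) (zeta : G0 G -> Mor (CatX G)),
       centre_obj (C := CatX G) x zeta ->
       exists xi, isZ0 x xi /\ xibar x xi = zeta)) /\
  (* (v) a : x -> y is a morphism in the centre iff (y,eta) = delta(a).(x,xi) *)
  (forall (x : G0 G) xi (y : G0 G) eta (a : G1 G), isZ0 x xi -> isZ0 y eta -> y = gmul (bd a) x ->
     (centre_hom (C := CatX G) x (xibar x xi) y (xibar y eta) (x, a)
      <-> (y, eta) = Z0mul (delta a) (x, xi))) /\
  (* monoidal compatibility: the bijection preserves tensor and unit *)
  (forall (x : G0 G) xi (y : G0 G) eta, isZ0 x xi -> isZ0 y eta ->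
     let p := Z0mul (x, xi) (y, eta) in
     ((fst p), xibar (fst p) (snd p))
     = centre_tens (C := CatX G) (x, xibar x xi) (y, xibar y eta)) /\
  (fst (Z0one G), xibar (fst (Z0one G)) (snd (Z0one G))) = centre_unit (CatX G).
Proof.
  split; [| split; [| split; [| split; [| split; [| split]]]]].
  - intros x xi Hxi. exact (xibar_hom Hxi).
  - intros x xi Hxi. exact (xibar_nat_iso Hxi).
  - intros x xi Hxi. exact (xibar_centre_obj Hxi).
  - split.
    + intros x xi x' xi' _ _. apply xibar_inj.
    + intros x zeta Hzeta. exact (centre_obj_from_Z0 Hzeta).
  - intros x xi y eta a _ _ Hy.
    split; [exact (centre_hom_Z0mul Hy) | exact (Z0mul_centre_hom Hy)].
  - intros x xi y eta _ _. apply xibar_Z0mul.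
  - apply xibar_Z0one.
Qed.
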